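(* Let $n\ge1$ and let $q:\Delta_n\to C_n(S^1)$ be $q(w_1,\dots,w_n)=\{w_1\bmod 1,\dots,w_n\bmod 1\}$. If $\sigma,\sigma'$ are two faces of $\Delta_n$ with the same number of vertices which are both extremal, then $q(\sigma)=q(\sigma')$; and if they are both non-extremal, then $q(\sigma)=q(\sigma')$.
   Context: $S^1=[0,1]/(0\sim1)=\mathbb{R}/\mathbb{Z}$. $C_n(S^1)$ is the set of nonempty subsets of $S^1$ with at most $n$ elements, topologized as a quotient of $(S^1)^n$ via $(x_1,\dots,x_n)\mapsto\{x_1,\dots,x_n\}$. $\Delta_n\subset\mathbb{R}^n$ is the $n$-simplex with vertices $b_0=0$ and $b_k=e_1+\dots+e_k$ for $1\le k\le n$ ($e_i$ the standard basis vectors). A face of $\Delta_n$ is extremal if its vertex set contains both $b_0$ and $b_n$, and non-extremal otherwise. *)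

From HB Require Import structures.
From mathcomp Require Import all_boot all_order all_algebra.
From mathcomp Require Import boolp classical_sets reals.
Set Implicit Arguments. Unset Strict Implicit. Unset Printing Implicit Defensive.
Import Order.TTheory GRing.Theory Num.Theory.
Local Open Scope ring_scope.
Local Open Scope classical_set_scope.

(* A point of S^1 = R/Z is represented by its unique representative in [0,1). *)
Definition mod1 {R : realType} (x : R) : R := x - (Num.floor x)%:~R.

(* Vertex b_k = e_1 + ... + e_k of Delta_n (b_0 = 0), k = 0..n. *)
Definition bvert {R : realType} (n : nat) (k : 'I_n.+1) : 'rV[R]_n :=
  \row_(i < n) (if (i < k)%N then 1 else 0).

Definition face {R : realType} (n : nat) (V : {set 'I_n.+1}) : set 'rV[R]_n :=
  [set w | exists t : 'I_n.+1 -> R,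
     (forall k, 0 <= t k) /\ (forall k, k \notin V -> t k = 0) /\
     \sum_k t k = 1 /\ w = \sum_(k in V) t k *: bvert k].

(* q(w_1,...,w_n) = {w_1 mod 1, ..., w_n mod 1}, an element of C_n(S^1)
   represented as a subset of [0,1). *)
Definition qmap {R : realType} (n : nat) (w : 'rV[R]_n) : set R :=
  [set mod1 (w ord0 i) | i in [set: 'I_n]].

Definition qface {R : realType} (n : nat) (V : {set 'I_n.+1}) : set (set R) :=
  (@qmap R n) @` face V.

Definition extremal (n : nat) (V : {set 'I_n.+1}) : bool :=
  (ord0 \in V) && (ord_max \in V).

From mathcomp Require Import all_boot all_order all_algebra.
From mathcomp Require Import boolp classical_sets reals.
From mathcomp Require Import zify.
Set Implicit Arguments. Unset Strict Implicit. Unset Printing Implicit Defensive.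
Import Order.TTheory GRing.Theory Num.Theory.
Local Open Scope ring_scope.
Local Open Scope classical_set_scope.

(* List the vertices of a face with vertex set V as b_(k_0), ..., b_(k_(m-1))
   with k_0 < ... < k_(m-1). A point of the face is sum_l u_l b_(k_l) with
   barycentric weights u, and its i-th coordinate is the tail sum
   T_j = u_j + ... + u_(m-1), where j is the first index with i < k_j. As i
   ranges over 0..n-1, j takes every value 1..m-1, the value 0 exactly when
   b_0 is not a vertex and the value m exactly when b_n is not a vertex. Since
   T_0 = 1 and T_m = 0 both reduce to 0 mod 1, q(sigma) is the set of all
   {T_1, ..., T_(m-1)} mod 1, with 0 added when sigma is non-extremal: it
   depends only on m and on whether sigma is extremal. *)

Lemma mod1_0 (R : realType) : mod1 (0 : R) = 0.
Proof. by rewrite /mod1 -(mulr0z 1) intrKfloor mulr0z subr0. Qed.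

Lemma mod1_1 (R : realType) : mod1 (1 : R) = 0.
Proof. by rewrite /mod1 -[X in Num.floor X]/(1%:~R) intrKfloor subrr. Qed.

Definition tail_sum (R : realType) (m : nat) (u : nat -> R) (j : nat) : R :=
  \sum_(j <= l < m) u l.

Definition weights (R : realType) (m : nat) : set (nat -> R) :=
  [set u | (forall l : nat, 0 <= u l) /\ \sum_(l < m) u l = 1].

Definition q_tails (R : realType) (m : nat) (u : nat -> R) (ext : bool) :
    set R :=
  [set mod1 (tail_sum m u j) | j in [set j : nat | (1 <= j < m)%N]] `|`
  (if ext then set0 else [set 0]).

Lemma tail_sum0 (R : realType) m (u : nat -> R) :
  \sum_(l < m) u l = 1 -> tail_sum m u 0 = 1.
Proof. by rewrite /tail_sum big_mkord. Qed.

Lemma tail_sum_size (R : realType) m (u : nat -> R) : tail_sum m u m = 0.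
Proof. by rewrite /tail_sum big_geq. Qed.

Section FaceOfVertexSet.
Variables (n : nat) (V : {set 'I_n.+1}).
Local Notation m := #|V|.

Definition vtx (l : nat) : 'I_n.+1 := nth ord0 (enum V) l.
Definition vtx_rank (k : 'I_n.+1) : nat := index k (enum V).

Lemma vtx_in l : (l < m)%N -> vtx l \in V.
Proof. by move=> lm; rewrite -mem_enum /vtx mem_nth // -cardE. Qed.

Lemma vtx_rank_lt k : k \in V -> (vtx_rank k < m)%N.
Proof. by move=> kV; rewrite cardE /vtx_rank index_mem mem_enum. Qed.

Lemma vtx_rankK k : k \in V -> vtx (vtx_rank k) = k.
Proof. by move=> kV; rewrite /vtx /vtx_rank nth_index // mem_enum. Qed.

Lemma vtxK l : (l < m)%N -> vtx_rank (vtx l) = l.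
Proof. by move=> lm; rewrite /vtx /vtx_rank index_uniq ?enum_uniq -?cardE. Qed.

Lemma big_vtx (M : nmodType) (F : 'I_n.+1 -> M) :
  \sum_(k in V) F k = \sum_(l < m) F (vtx l).
Proof. by rewrite -big_enum (big_nth ord0) -cardE big_mkord. Qed.

Let ltn_ord_trans : transitive (fun a b : 'I_n.+1 => (a < b)%N).
Proof. by move=> a b c; apply: ltn_trans. Qed.

Lemma sorted_enum_set : sorted (fun a b : 'I_n.+1 => (a < b)%N) (enum V).
Proof.
rewrite /enum_mem -enumT; apply: sorted_filter => //.
by have := iota_ltn_sorted 0 n.+1; rewrite -val_enum_ord sorted_map.
Qed.

Lemma ltn_vtx l1 l2 : (l1 < m)%N -> (l2 < m)%N ->
  (vtx l1 < vtx l2)%N = (l1 < l2)%N.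
Proof.
have vtx_homo := sorted_ltn_nth ltn_ord_trans ord0 sorted_enum_set.
move=> l1m l2m; apply/idP/idP => [|lt12]; last first.
  by apply: vtx_homo; rewrite ?inE -?cardE.
apply: contraTT; rewrite -!leqNgt leq_eqVlt => /orP[/eqP->//|lt21].
by apply/ltnW/vtx_homo; rewrite ?inE -?cardE.
Qed.

Definition cut (i : nat) : nat := find (fun k : 'I_n.+1 => (i < k)%N) (enum V).

Lemma cut_le i : (cut i <= m)%N.
Proof. by rewrite cardE find_size. Qed.

Lemma ltn_vtx_cut i l : (l < m)%N -> (i < vtx l)%N = (cut i <= l)%N.
Proof.
move=> lm; case: (ltnP l (cut i)) => [lt_cut | cut_le_l].
  exact: (before_find ord0 lt_cut).
have cut_lt : (cut i < m)%N := leq_ltn_trans cut_le_l lm.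
have has_gt : has (fun k : 'I_n.+1 => (i < k)%N) (enum V).
  by rewrite has_find -cardE.
have i_lt_cut : (i < vtx (cut i))%N := nth_find ord0 has_gt.
apply: (leq_trans i_lt_cut).
move: cut_le_l; rewrite leq_eqVlt => /orP[/eqP-> // | lt].
by apply: ltnW; rewrite [(_ < _)%N]ltn_vtx.
Qed.

Lemma cut_gt0 i : ord0 \in V -> (0 < cut i)%N.
Proof.
move=> V0; have := ltn_vtx_cut i (vtx_rank_lt V0).
by rewrite vtx_rankK //= ltn0 => /esym/negbT; rewrite -ltnNge; apply: leq_trans.
Qed.

Lemma cut_lt i : (i < n)%N -> ord_max \in V -> (cut i < m)%N.
Proof.
move=> ltin Vn; have := ltn_vtx_cut i (vtx_rank_lt Vn).
rewrite vtx_rankK //= ltin => /esym cut_le_rank.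
exact: leq_ltn_trans cut_le_rank (vtx_rank_lt Vn).
Qed.

Lemma cut_vtx j : (1 <= j < m)%N -> cut (vtx j.-1) = j.
Proof.
case/andP=> j1 jm; have j1m : (j.-1 < m)%N by lia.
have := ltn_vtx_cut (vtx j.-1) jm; have := ltn_vtx_cut (vtx j.-1) j1m.
rewrite ltnn ltn_vtx //; lia.
Qed.

Lemma cut0 : ord0 \notin V -> cut 0 = 0%N.
Proof.
rewrite /cut => V0; case: (enum V) (mem_enum V) => //= k s enumV.
have : k != ord0 by apply: contraNneq V0 => <-; rewrite -enumV inE eqxx.
by rewrite -val_eqE /= lt0n => ->.
Qed.

Lemma cut_last : ord_max \notin V -> cut n.-1 = m.
Proof.
move=> Vn; rewrite cardE; apply: hasNfind; apply/hasPn => k.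
rewrite mem_enum => kV; have : k != ord_max by apply: contraNneq Vn => <-.
by rewrite -val_eqE /= -leqNgt; move: (ltn_ord k); lia.
Qed.

Variable R : realType.

Definition face_pt (u : nat -> R) : 'rV[R]_n :=
  \sum_(l < m) u l *: bvert (vtx l).

Lemma face_pt_coord u (i : 'I_n) : face_pt u ord0 i = tail_sum m u (cut i).
Proof.
rewrite /face_pt summxE.
transitivity (\sum_(l < m) if (cut i <= l)%N then u l else 0).
  apply: eq_bigr => l _; rewrite mxE /bvert mxE -ltn_vtx_cut //.
  by case: ifP; rewrite ?mulr1 ?mulr0.
rewrite -(big_mkord xpredT (fun l => if (cut i <= l)%N then u l else 0)).
rewrite (big_cat_nat (leq0n _) (cut_le i)) /= big_nat big1 ?add0r.
  by apply: eq_big_nat => l /andP[-> _].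
by move=> l /andP[_]; rewrite ltnNge => /negbTE ->.
Qed.

Lemma face_eq : face V = face_pt @` weights m.
Proof.
apply/seteqP; split => w.
  case=> t [t_ge0 [t_supp [t_sum ->]]].
  exists (t \o vtx); last by rewrite big_vtx.
  split=> //=; rewrite -big_vtx -t_sum [RHS](bigID (mem V)) /=.
  by rewrite [X in _ = _ + X]big1 ?addr0.
case=> u [u_ge0 u_sum] <-.
exists (fun k => if k \in V then u (vtx_rank k) else 0).
split; first by move=> k; case: ifP.
split; first by move=> k /negbTE ->.
split.
  by rewrite -big_mkcond /= big_vtx -u_sum; apply: eq_bigr => l _; rewrite vtxK.
by rewrite big_vtx; apply: eq_bigr => l _; rewrite vtx_in // vtxK.
Qed.

Lemma qmap_face_pt_sub (u : nat -> R) : \sum_(l < m) u l = 1 ->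
  qmap (face_pt u) `<=` q_tails m u (extremal V).
Proof.
move=> u_sum _ [i _ <-]; rewrite face_pt_coord.
have [cut_eq0 | cut_pos] := posnP (cut i).
  have /negbTE-> : ~~ extremal V.
    apply: contraPN cut_eq0 => /andP[V0 _].
    by apply/eqP; rewrite -lt0n cut_gt0.
  by right; rewrite cut_eq0 tail_sum0 // mod1_1.
have [cut_ltm | cut_gem] := ltnP (cut i) m.
  by left; exists (cut i) => //; apply/andP.
have cut_eqm : cut i = m by apply/eqP; rewrite eqn_leq cut_le.
have /negbTE-> : ~~ extremal V.
  apply/negP => /andP[_ Vn].
  by move: (cut_lt (ltn_ord i) Vn); rewrite cut_eqm ltnn.
by right; rewrite cut_eqm tail_sum_size mod1_0.
Qed.

Lemma q_tails_sub_qmap (u : nat -> R) : (1 <= n)%N -> \sum_(l < m) u l = 1 ->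
  q_tails m u (extremal V) `<=` qmap (face_pt u).
Proof.
move=> n_gt0 u_sum x [[j jm <-] | ].
  have vtx_lt_n : (vtx j.-1 < n)%N.
    have : (vtx j.-1 < vtx j)%N by rewrite ltn_vtx //=; move: jm => /=; lia.
    by move/leq_trans; apply; rewrite -ltnS ltn_ord.
  by exists (Ordinal vtx_lt_n) => //; rewrite face_pt_coord /= cut_vtx.
case: (boolP (extremal V)) => //= /nandP[V0 | Vn] ->.
  exists (Ordinal n_gt0) => //.
  by rewrite face_pt_coord /= cut0 // tail_sum0 // mod1_1.
have ltn1n : (n.-1 < n)%N by lia.
exists (Ordinal ltn1n) => //.
by rewrite face_pt_coord /= cut_last // tail_sum_size mod1_0.
Qed.

Lemma qmap_face_pt (u : nat -> R) : (1 <= n)%N -> \sum_(l < m) u l = 1 ->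
  qmap (face_pt u) = q_tails m u (extremal V).
Proof.
move=> n_gt0 u_sum.
by apply/seteqP; split; [exact: qmap_face_pt_sub | exact: q_tails_sub_qmap].
Qed.

Lemma qface_eq : (1 <= n)%N ->
  qface (R := R) V = [set q_tails m u (extremal V) | u in weights m].
Proof.
move=> n_gt0; rewrite /qface face_eq; apply/seteqP; split => x.
  case=> _ [u [u_ge0 u_sum] <-] <-; exists u => //.
  by rewrite qmap_face_pt.
case=> u [u_ge0 u_sum] <-; exists (face_pt u); first by exists u.
by rewrite qmap_face_pt.
Qed.

End FaceOfVertexSet.

Theorem lemma10p1 (R : realType) (n : nat) (hn : (1 <= n)%N)
  (V V' : {set 'I_n.+1}) (hV : V != finset.set0) (hV' : V' != finset.set0)
  (hcard : #|V| = #|V'|) :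
  ((extremal V /\ extremal V') -> qface (R := R) V = qface V') /\
  ((~~ extremal V /\ ~~ extremal V') -> qface (R := R) V = qface V').
Proof.
rewrite !qface_eq // hcard.
by split => [[-> ->] | [/negbTE -> /negbTE ->]].
Qed.
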